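(* Let $n$ and $k$ be positive integers, and let $\mathcal{Q}$ be a Boolean lattice of dimension $n+k$ whose elements are colored blue or red. Then $\mathcal{Q}$ contains an all-red copy of $Q_n$ or an all-blue chain of length $k+1$ (i.e. on $k+1$ elements).
   Context: The Boolean lattice of dimension $N$ is the poset of all subsets of an $N$-element set ordered by inclusion; $Q_n$ denotes the Boolean lattice of dimension $n$. A copy of $Q_n$ in $\mathcal{Q}$ is an induced subposet of $\mathcal{Q}$ isomorphic to $Q_n$. *)

From mathcomp Require Import all_boot.
Set Implicit Arguments. Unset Strict Implicit. Unset Printing Implicit Defensive.


(* A copy of Q_n in Q_N: an induced subposet isomorphic to Q_n, i.e. the image
   of an order embedding f : Q_n -> Q_N (A \subset B <-> f A \subset f B). *)
Definition order_embedding (n N : nat) (f : {set 'I_n} -> {set 'I_N}) : Prop :=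
  forall A B : {set 'I_n}, (A \subset B) = (f A \subset f B).

Definition is_chain (N : nat) (s : seq {set 'I_N}) : Prop :=
  uniq s /\ forall A B : {set 'I_N}, A \in s -> B \in s -> (A \subset B) || (B \subset A).

(* Assume there is no blue chain on k+1 elements.  For A in Q_n put
   X_j(A) = A + {n, ..., n+j-1} in Q_(n+k), and let j(A) be the least j such
   that no blue chain on j+1 elements lies below X_j(A); it exists and is at
   most k.  The set X_j(A) for j = j(A) is red: otherwise it would extend a
   blue chain on j elements below the smaller set X_(j-1)(A) (or, for j = 0,
   be itself a blue chain on one element).  Since j(A) is monotone in A, the
   map A |-> X_(j(A))(A) is an order embedding of Q_n onto an all-red copy. *)

From mathcomp Require Import all_boot.
Set Implicit Arguments. Unset Strict Implicit. Unset Printing Implicit Defensive.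

Section BlueChains.
Variables (N : nat) (colour : {set 'I_N} -> bool).

Definition chainb (s : seq {set 'I_N}) : bool :=
  uniq s && all (fun A : {set 'I_N} =>
                  all (fun B : {set 'I_N} => (A \subset B) || (B \subset A)) s) s.

Lemma chainbP (s : seq {set 'I_N}) : reflect (is_chain s) (chainb s).
Proof.
apply: (iffP andP) => [[us ch]|[us ch]]; split=> //.
  by move=> A B As Bs; exact: (allP (allP ch A As) B Bs).
by apply/allP=> A As; apply/allP=> B Bs; exact: ch.
Qed.

Definition has_blue_chain_in (X : {set 'I_N}) (m : nat) : bool :=
  [exists t : m.-tuple {set 'I_N},
     chainb t && all (fun Y : {set 'I_N} => ~~ colour Y && (Y \subset X)) t].

Lemma has_blue_chain_inS (X Y : {set 'I_N}) m :
  X \subset Y -> has_blue_chain_in X m -> has_blue_chain_in Y m.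
Proof.
move=> XY /existsP[t /andP[ch bl]]; apply/existsP; exists t; rewrite ch /=.
apply/allP=> Z Zt; have /andP[-> ZX] := allP bl Z Zt.
exact: subset_trans ZX XY.
Qed.

Lemma has_blue_chain_in1 (Y : {set 'I_N}) :
  ~~ colour Y -> has_blue_chain_in Y 1.
Proof. by move=> bY; apply/existsP; exists [tuple Y]; rewrite /chainb /= subxx bY. Qed.

Lemma has_blue_chain_in_proper (X Y : {set 'I_N}) m :
  X \proper Y -> ~~ colour Y -> has_blue_chain_in X m -> has_blue_chain_in Y m.+1.
Proof.
move=> /properP[XY [y yY ynX]] bY /existsP[t /andP[/andP[ut ch] bl]].
have tX Z : Z \in t -> Z \subset X by move=> Zt; case/andP: (allP bl Z Zt).
have tY Z : Z \in t -> Z \subset Y by move=> Zt; exact: subset_trans (tX Z Zt) XY.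
have Ynt : Y \notin t.
  by apply/negP=> /tX /subsetP /(_ y yY); rewrite (negbTE ynX).
apply/existsP; exists (cons_tuple Y t).
rewrite /chainb /= Ynt ut subxx bY /=.
rewrite -andbA; apply/and3P; split.
- by apply/allP=> B Bt; rewrite tY ?orbT.
- by apply/allP=> A At /=; rewrite tY // (allP ch A At).
- by apply/allP=> Z Zt; rewrite tY // andbT; case/andP: (allP bl Z Zt).
Qed.

Lemma blue_chain_of_has_blue_chain_in (X : {set 'I_N}) m :
  has_blue_chain_in X m ->
  exists s : seq {set 'I_N},
    size s = m /\ is_chain s /\ forall Y, Y \in s -> colour Y = false.
Proof.
case/existsP=> t /andP[/chainbP ch bl]; exists t; split; first exact: size_tuple.
by split=> // Y Yt; apply/negbTE; case/andP: (allP bl Y Yt).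
Qed.

End BlueChains.

Section PaddedCube.
Variables n k : nat.

Definition pad (A : {set 'I_n}) (j : nat) : {set 'I_(n + k)} :=
  lshift k @: A :|: [set i : 'I_(n + k) | n <= i < n + j].

Lemma padSS (A B : {set 'I_n}) i j :
  A \subset B -> i <= j -> pad A i \subset pad B j.
Proof.
move=> AB ij; apply: setUSS; first exact: imsetS.
apply/subsetP=> x; rewrite !inE => /andP[-> lt] /=.
by rewrite (leq_trans lt) // leq_add2l.
Qed.

Lemma pad_subsetK (A B : {set 'I_n}) i j :
  pad A i \subset pad B j -> A \subset B.
Proof.
move=> /subsetP sAB; apply/subsetP=> x xA.
have /sAB : lshift k x \in pad A i by rewrite inE imset_f.
rewrite !inE /= leqNgt ltn_ord orbF => /imsetP[y yB /lshift_inj ->] //.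
Qed.

Lemma pad_proper (A : {set 'I_n}) j : j < k -> pad A j \proper pad A j.+1.
Proof.
move=> jk; rewrite properEneq padSS // andbT.
have njk : n + j < n + k by rewrite ltn_add2l.
apply/eqP=> /setP /(_ (Ordinal njk)); rewrite !inE /= leq_addr ltnn ltn_add2l ltnSn.
rewrite andbF andbT orbF orbT => /imsetP[x _ /(congr1 val) /= ej].
by move: (ltn_ord x); rewrite -ej ltnNge leq_addr.
Qed.

End PaddedCube.

Section RedCopy.
Variables (n k : nat) (colour : {set 'I_(n + k)} -> bool).
Hypothesis no_blue_chain : forall X, ~~ has_blue_chain_in colour X k.+1.

Let exists_level (A : {set 'I_n}) :
  exists j, ~~ has_blue_chain_in colour (pad k A j) j.+1.
Proof. by exists k. Qed.

Definition level (A : {set 'I_n}) : nat := ex_minn (exists_level A).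

Lemma levelP (A : {set 'I_n}) :
  ~~ has_blue_chain_in colour (pad k A (level A)) (level A).+1.
Proof. by rewrite /level; case: ex_minnP. Qed.

Lemma level_min (A : {set 'I_n}) j :
  ~~ has_blue_chain_in colour (pad k A j) j.+1 -> level A <= j.
Proof. by rewrite /level; case: ex_minnP => i _; apply. Qed.

Lemma level_le (A : {set 'I_n}) : level A <= k.
Proof. exact: level_min. Qed.

Lemma level_mono (A B : {set 'I_n}) : A \subset B -> level A <= level B.
Proof.
move=> AB; apply: level_min; apply: contra (levelP B).
by apply: has_blue_chain_inS; apply: padSS.
Qed.

Lemma colour_pad_level (A : {set 'I_n}) : colour (pad k A (level A)).
Proof.
apply/negPn/negP=> blue; move: (levelP A) (@level_min A) (level_le A).
case: (level A) blue => [|j] blue noP minP jk; move/negP: noP; apply.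
  exact: has_blue_chain_in1.
apply: has_blue_chain_in_proper (pad_proper A jk) blue _.
by apply: contraT => /minP; rewrite ltnn.
Qed.

Lemma red_copy :
  exists f : {set 'I_n} -> {set 'I_(n + k)},
    order_embedding f /\ forall A, colour (f A) = true.
Proof.
exists (fun A => pad k A (level A)); split; last exact: colour_pad_level.
move=> A B; apply/idP/idP; last exact: pad_subsetK.
by move=> AB; apply: padSS AB (level_mono AB).
Qed.

End RedCopy.

Theorem corollary9 (n k : nat) (hn : 0 < n) (hk : 0 < k)
    (colour : {set 'I_(n + k)} -> bool) :
  (exists f : {set 'I_n} -> {set 'I_(n + k)},
      order_embedding f /\ forall A, colour (f A) = true)
  \/
  (exists s : seq {set 'I_(n + k)},
      size s = k.+1 /\ is_chain s /\ forall X, X \in s -> colour X = false).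
Proof.
have [blue_chain | no_blue_chain] := boolP (has_blue_chain_in colour setT k.+1).
  by right; exact: blue_chain_of_has_blue_chain_in blue_chain.
left; apply: red_copy => X; apply: contra no_blue_chain.
exact: has_blue_chain_inS (subsetT X).
Qed.
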